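(* Let $R$ be an integral domain, $M$ an $R$-module, and $\mathrm{Tor}(M)$ its $R$-torsion submodule. Then $\mathbb{P}(M)=\mathbb{P}(\mathrm{Tor}(M))\sqcup\mathbb{P}(M/\mathrm{Tor}(M))$, in the following sense: $\mathbb{P}(M)$ is the disjoint union of the set $\mathbb{T}(M)$ of classes represented by nonzero torsion elements and the set $\mathbb{F}(M)$ of classes represented by non-torsion elements; the inclusion $\mathrm{Tor}(M)\to M$ induces a bijection $\mathbb{P}(\mathrm{Tor}(M))\to\mathbb{T}(M)$; and $[a]\mapsto[\bar a]$, with $\bar a$ the image of $a$ in $M/\mathrm{Tor}(M)$, is a bijection $\mathbb{F}(M)\to\mathbb{P}(M/\mathrm{Tor}(M))$.
   Context: For an $R$-module $N$ let $N^\circ=N\setminus\{0\}$; define $x\sim'y$ on $N^\circ$ if there exist $m\in N$ and $r,s\in R$ with $x=rm$, $y=sm$; let $\sim$ be the equivalence relation generated by $\sim'$; and let $\mathbb{P}(N)=N^\circ/\sim$, with $[x]$ the class of $x$. An element is $R$-torsion if it is annihilated by some nonzero element of $R$. *)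

From HB Require Import structures.
From mathcomp Require Import all_boot all_order all_algebra.
From mathcomp Require Import boolp classical_sets functions.
From Stdlib Require Import Relations.Relation_Operators.
Set Implicit Arguments. Unset Strict Implicit. Unset Printing Implicit Defensive.
Import GRing.Theory.
Local Open Scope ring_scope.
Local Open Scope classical_set_scope.

Section Proj.
Variables (R : nzRingType) (N : lmodType R).

Definition simrel (x y : N) : Prop :=
  x != 0 /\ y != 0 /\ exists (m : N) (r s : R), x = r *: m /\ y = s *: m.

Definition projeq (x y : N) : Prop := clos_refl_sym_trans N simrel x y.

Definition pclass (x : N) : set N := [set y | y != 0 /\ projeq x y].

Definition PP : set (set N) := [set C | exists2 x : N, x != 0 & C = pclass x].

Definition torsion (x : N) : Prop := exists r : R, r != 0 /\ r *: x = 0.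

Definition TT : set (set N) :=
  [set C | exists2 x : N, x != 0 /\ torsion x & C = pclass x].

Definition FF : set (set N) := [set C | exists2 x : N, ~ torsion x & C = pclass x].
End Proj.

(* The map on classes induced by f : U -> V, [x] |-> [f x]
   (defined choice-free as the union of the [f x] over x in the class). *)
Definition induced (R : nzRingType) (U V : lmodType R) (f : U -> V)
  (C : set U) : set V := \bigcup_(x in C) pclass (f x).

Arguments PP {R} N.
Arguments TT {R} N.
Arguments FF {R} N.

(** Over a domain, scaling by a nonzero scalar neither creates nor destroys
    torsion, so ~ preserves torsion and P(M) splits into T(M) and F(M).
    Tor(M) is pure (if r m is torsion and r <> 0 then m is torsion), hence a
    ~-chain in M starting in Tor(M) stays in Tor(M) and is a ~-chain there.
    Two non-torsion lifts a, b of the same element of M/Tor(M) satisfy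
    c a = c b <> 0 for some c <> 0, so a ~ c a ~ b; this lets ~-chains of
    M/Tor(M) be lifted, step by step, to ~-chains of non-torsion elements. *)
From HB Require Import structures.
From mathcomp Require Import all_boot all_order all_algebra.
From mathcomp Require Import boolp classical_sets functions.
From Stdlib Require Import Relations.Relation_Operators.
From Stdlib Require Import Relations.Operators_Properties.
Import GRing.Theory.
Local Open Scope ring_scope.
Local Open Scope classical_set_scope.
Set Implicit Arguments. Unset Strict Implicit.

Section ProjectiveClasses.
Variable R : nzRingType.

Section OneModule.
Variable N : lmodType R.
Implicit Types x y z : N.

Lemma simrel_sym x y : simrel x y -> simrel y x.
Proof. by move=> [x0 [y0 [m [r [s [ex ey]]]]]]; do 2!split=> //; exists m, s, r. Qed.

Lemma simrel_projeq x y : simrel x y -> projeq x y.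
Proof. exact: rst_step. Qed.

Lemma projeq_refl x : projeq x x.
Proof. exact: rst_refl. Qed.

Lemma projeq_sym x y : projeq x y -> projeq y x.
Proof. exact: rst_sym. Qed.

Lemma projeq_trans x y z : projeq x y -> projeq y z -> projeq x z.
Proof. exact: rst_trans. Qed.

Lemma projeq_ind x (P : N -> Prop) :
  P x -> (forall y z, projeq x y -> simrel y z -> P y -> P z) ->
  forall y, projeq x y -> P y.
Proof.
move=> Px Pstep y /clos_rst_rstn1_iff; elim=> // {}y z yz xy Py.
have {}yz : simrel y z by case: yz => // /simrel_sym.
by apply: Pstep Py => //; apply/clos_rst_rstn1_iff.
Qed.

Lemma simrel_scale (c : R) x : c *: x != 0 -> simrel x (c *: x).
Proof.
move=> cx0; split; first by apply: contraNneq cx0 => ->; rewrite scaler0.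
by split=> //; exists x, 1, c; rewrite scale1r.
Qed.

Lemma pclass_id x : x != 0 -> pclass x x.
Proof. by move=> x0; split=> //; apply: projeq_refl. Qed.

Lemma eq_pclassP x y : y != 0 -> pclass x = pclass y <-> projeq x y.
Proof.
move=> y0; split=> [xy | xy].
  by have [] : pclass x y by rewrite xy; apply: pclass_id.
apply/seteqP; split=> z [z0 hz]; split=> //.
  exact: projeq_trans (projeq_sym xy) hz.
exact: projeq_trans xy hz.
Qed.

End OneModule.

Section LinearImage.
Variables (U V : lmodType R) (f : {linear U -> V}).

Lemma simrel_linear x y :
  simrel x y -> f x != 0 -> f y != 0 -> simrel (f x) (f y).
Proof.
move=> [_ [_ [m [r [s [-> ->]]]]]] fx0 fy0; do 2!split=> //.
by exists (f m), r, s; rewrite !linearZ_LR.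
Qed.

Lemma projeq_linear x :
  (forall y, projeq x y -> y != 0 -> f y != 0) ->
  forall y, projeq x y -> projeq (f x) (f y).
Proof.
move=> f_neq0; apply: projeq_ind => [|y z xy yz fxy]; first exact: projeq_refl.
have xz : projeq x z := projeq_trans xy (simrel_projeq yz).
have [y0 [z0 _]] := yz.
by apply: projeq_trans fxy (simrel_projeq (simrel_linear yz _ _)); apply: f_neq0.
Qed.

Lemma induced_pclass x :
  x != 0 -> (forall y, projeq x y -> y != 0 -> f y != 0) ->
  induced f (pclass x) = pclass (f x).
Proof.
move=> x0 f_neq0; apply/seteqP; split; last first.
  by move=> y xy; exists x => //; apply: pclass_id.
move=> z [y [_ xy] [z0 yz]]; split=> //.
exact: projeq_trans (projeq_linear f_neq0 xy) yz.
Qed.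

End LinearImage.

Section PureEmbedding.
Variables (T M : lmodType R) (i : {linear T -> M}).
Hypothesis i_inj : injective i.
Hypothesis i_pure :
  forall (r : R) (m : M) (t : T), r != 0 -> r *: m = i t -> exists t', m = i t'.

Lemma pure_simrel_lift a y : simrel (i a) y -> exists2 b, y = i b & simrel a b.
Proof.
move=> [ia0 [y0 [m [r [s [ea ey]]]]]].
have r0 : r != 0 by apply: contraNneq ia0 => r0; rewrite ea r0 scale0r.
have [t mt] := i_pure r0 (esym ea); subst y m.
have a_rt : a = r *: t by apply: i_inj; rewrite ea linearZ_LR.
subst a; exists (s *: t); first by rewrite linearZ_LR.
split; [|split]; last by exists t, r, s.
  by rewrite -(raddf_eq0 _ i_inj).
by move: y0; rewrite -linearZ_LR (raddf_eq0 _ i_inj).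
Qed.

Lemma pure_projeq_lift a y : projeq (i a) y -> exists2 b, y = i b & projeq a b.
Proof.
move: y; apply: projeq_ind => [|y z _ yz [b yb ab]].
  by exists a; last exact: projeq_refl.
subst y; have [c -> bc] := pure_simrel_lift yz.
by exists c; last exact: projeq_trans ab (simrel_projeq bc).
Qed.

Lemma pure_projeq_reflect a b : projeq (i a) (i b) -> projeq a b.
Proof. by move=> /pure_projeq_lift[c /i_inj ->]. Qed.

Lemma induced_pure_pclass t : t != 0 -> induced i (pclass t) = pclass (i t).
Proof. by move=> t0; apply: induced_pclass => // y _; rewrite (raddf_eq0 _ i_inj). Qed.

Lemma induced_pure_inj : {in PP T &, injective (induced i)}.
Proof.
move=> _ _ /[!inE] -[a a0 ->] [b b0 ->].
rewrite !induced_pure_pclass // => /eq_pclassP ab.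
apply/eq_pclassP => //; apply: pure_projeq_reflect; apply: ab.
by rewrite (raddf_eq0 _ i_inj).
Qed.

End PureEmbedding.

End ProjectiveClasses.

Section Torsion.
Variable R : idomainType.

Section OneModule.
Variable N : lmodType R.
Implicit Types x y : N.

Lemma torsion0 : torsion (0 : N).
Proof. by exists 1; rewrite oner_neq0 scaler0. Qed.

Lemma nontorsion_neq0 x : ~ torsion x -> x != 0.
Proof. by apply: contra_notN => /eqP ->; apply: torsion0. Qed.

Lemma torsionZE (r : R) x : r != 0 -> torsion (r *: x) <-> torsion x.
Proof.
move=> r0; split=> -[a [a0 ax]].
  by exists (a * r); rewrite mulf_neq0 // -scalerA.
by exists a; rewrite scalerA mulrC -scalerA ax scaler0.
Qed.

Lemma simrel_torsion x y : simrel x y -> torsion x -> torsion y.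
Proof.
move=> [x0 [y0 [m [r [s [ex ey]]]]]]; subst x y.
have r0 : r != 0 by apply: contraNneq x0 => ->; rewrite scale0r.
have s0 : s != 0 by apply: contraNneq y0 => ->; rewrite scale0r.
by rewrite !torsionZE.
Qed.

Lemma projeq_torsion x y : projeq x y -> torsion x -> torsion y.
Proof. by move=> xy tx; move: y xy; apply: projeq_ind => // y z _ /simrel_torsion. Qed.

Lemma projeq_nontorsion x y : projeq x y -> ~ torsion x -> ~ torsion y.
Proof. by move=> xy nx /(projeq_torsion (projeq_sym xy)). Qed.

Lemma PP_torsion_split : PP N = TT N `|` FF N.
Proof.
apply/seteqP; split=> [_ [x x0 ->] | _ [[x [x0 _] ->] | [x nx ->]]].
- by have [tx | nx] := pselect (torsion x); [left | right]; exists x.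
- by exists x.
- by exists x => //; apply: nontorsion_neq0.
Qed.

Lemma TT_FF_disjoint : TT N `&` FF N = set0.
Proof.
apply/seteqP; split=> // _ [[x [x0 tx] ->] [y ny xy]].
move/(eq_pclassP _ (nontorsion_neq0 ny)): xy => xy.
exact: projeq_nontorsion (projeq_sym xy) ny tx.
Qed.

End OneModule.

Section TorsionEmbedding.
Variables (T M : lmodType R) (i : {linear T -> M}).
Hypothesis i_inj : injective i.
Hypothesis i_torsion : forall x : M, torsion x <-> exists t, x = i t.

Lemma torsion_pure (r : R) (m : M) (t : T) :
  r != 0 -> r *: m = i t -> exists t', m = i t'.
Proof. by move=> r0 rm; apply/i_torsion/(torsionZE _ r0)/i_torsion; exists t. Qed.

Lemma induced_torsion_bij : set_bij (PP T) (TT M) (induced i).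
Proof.
have i_neq0 t : t != 0 -> i t != 0 by rewrite raddf_eq0.
split.
- move=> _ [t t0 ->]; rewrite (induced_pure_pclass i_inj t0).
  by exists (i t) => //; split; [exact: i_neq0 | apply/i_torsion; exists t].
- exact: induced_pure_inj i_inj torsion_pure.
- move=> _ [x [x0 /i_torsion[t xt]] ->]; subst x.
  have t0 : t != 0 by apply: contraNneq x0 => ->; rewrite linear0.
  exists (pclass t); first by exists t.
  by rewrite (induced_pure_pclass i_inj t0).
Qed.

End TorsionEmbedding.

Section TorsionQuotient.
Variables (M Q : lmodType R) (p : {linear M -> Q}).
Hypothesis p_surj : forall q : Q, exists m, p m = q.
Hypothesis p_ker : forall x : M, p x = 0 <-> torsion x.

Lemma quotient_neq0 a : ~ torsion a -> p a != 0.
Proof. by move=> na; apply/eqP => /p_ker. Qed.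

Lemma projeq_fibre a b : ~ torsion a -> p a = p b -> projeq a b.
Proof.
move=> na pab.
have [c [c0 cab]] : torsion (a - b) by apply/p_ker; rewrite linearB pab subrr.
have ca : c *: a = c *: b by apply/eqP; rewrite -subr_eq0 -scalerBr cab.
have ca0 : c *: a != 0 by apply/eqP => ca0; apply: na; exists c.
have cb0 : c *: b != 0 by rewrite -ca.
apply: projeq_trans (simrel_projeq (simrel_scale ca0)) _.
by rewrite ca; apply/projeq_sym/simrel_projeq/simrel_scale.
Qed.

Lemma quotient_simrel_lift a z :
  ~ torsion a -> simrel (p a) z -> exists2 b, p b = z & projeq a b.
Proof.
move=> na [pa0 [z0 [n [r [s [ea ez]]]]]].
have [m pm] := p_surj n; subst n z.
have prm : p (r *: m) = p a by rewrite linearZ_LR ea.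
have psm : p (s *: m) = s *: p m by rewrite linearZ_LR.
exists (s *: m) => //.
apply: projeq_trans (projeq_fibre na (esym prm)) (simrel_projeq _).
split; first by apply: contraNneq pa0 => rm0; rewrite -prm rm0 linear0.
split; first by apply: contraNneq z0 => sm0; rewrite -psm sm0 linear0.
by exists m, r, s.
Qed.

Lemma quotient_projeq_lift a q :
  ~ torsion a -> projeq (p a) q -> exists2 b, p b = q & projeq a b.
Proof.
move=> na; move: q; apply: projeq_ind => [|y z _ yz [b pb ab]].
  by exists a; last exact: projeq_refl.
subst y; have [c <- bc] := quotient_simrel_lift (projeq_nontorsion ab na) yz.
by exists c; last exact: projeq_trans ab bc.
Qed.

Lemma quotient_projeq_reflect a b : ~ torsion a -> projeq (p a) (p b) -> projeq a b.
Proof.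
move=> na /(quotient_projeq_lift na)[c pc ac].
exact: projeq_trans ac (projeq_fibre (projeq_nontorsion ac na) pc).
Qed.

Lemma induced_quotient_pclass a : ~ torsion a -> induced p (pclass a) = pclass (p a).
Proof.
move=> na; apply: induced_pclass (nontorsion_neq0 na) _ => y ay _.
exact/quotient_neq0/(projeq_nontorsion ay).
Qed.

Lemma induced_quotient_bij : set_bij (FF M) (PP Q) (induced p).
Proof.
split.
- move=> _ [a na ->]; rewrite induced_quotient_pclass //.
  by exists (p a) => //; apply: quotient_neq0.
- move=> _ _ /[!inE] -[a na ->] [b nb ->].
  rewrite !induced_quotient_pclass // => /eq_pclassP pab.
  apply/eq_pclassP; first exact: nontorsion_neq0.
  exact/(quotient_projeq_reflect na)/pab/quotient_neq0.
- move=> _ [q q0 ->]; have [m pm] := p_surj q; subst q.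
  have nm : ~ torsion m by move=> /p_ker pm0; rewrite pm0 eqxx in q0.
  exists (pclass m); first by exists m.
  exact: induced_quotient_pclass.
Qed.

End TorsionQuotient.

End Torsion.

Theorem theorem4p17 (R : idomainType) (M T Q : lmodType R)
  (i : {linear T -> M}) (p : {linear M -> Q}) :
  injective i ->
  (forall x : M, torsion x <-> exists t : T, x = i t) ->
  (forall q : Q, exists m : M, p m = q) ->
  (forall x : M, p x = 0 <-> torsion x) ->
  [/\ PP M = TT M `|` FF M,
      TT M `&` FF M = set0,
      set_bij (PP T) (TT M) (induced i)
    & set_bij (FF M) (PP Q) (induced p)].
Proof.
move=> i_inj i_torsion p_surj p_ker; split.
- exact: PP_torsion_split.
- exact: TT_FF_disjoint.
- exact: induced_torsion_bij i_inj i_torsion.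
- exact: induced_quotient_bij p_surj p_ker.
Qed.
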